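(* For any samples $(X_i,y_i)_{i=1}^n$ with $X_i\in\mathbb{R}^d$, $y_i\in\mathbb{R}$, and any $k\ge 0$, it holds that $\mathrm{Stability}(X,y)\le k$ if and only if $$\exists\lambda\in\mathbb{R}^{d-1}:\ \forall u\in\mathbb{R}^d:\ \exists w\in[0,1]^n:\ \|w\|_1\ge n-k \ \wedge\ \sum_{i=1}^n w_i(\langle\tilde X_i,\lambda\rangle - y_i)\langle X_i,u\rangle\ge 0.$$
   Context: For $w\in[0,1]^n$, $\mathrm{OLS}(X,y,w) := \arg\min_{\beta\in\mathbb{R}^d}\frac1n\sum_{i=1}^n w_i(\langle X_i,\beta\rangle - y_i)^2$, and $\mathrm{Stability}(X,y) := \inf_{w\in[0,1]^n,\ \beta\in\mathbb{R}^d}\{\, n-\|w\|_1 : \beta_1 = 0 \text{ and } \beta\in \mathrm{OLS}(X,y,w)\}$. $\tilde X_i\in\mathbb{R}^{d-1}$ denotes the vector of coordinates $2,\dots,d$ of $X_i$ (i.e. the $i$-th row of the $n\times(d-1)$ matrix $\tilde X$ whose columns are columns $2,\dots,d$ of the matrix $X$ with rows $X_i$). *)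

From HB Require Import structures.
From mathcomp Require Import all_boot all_order all_algebra.
From mathcomp Require Import boolp classical_sets reals constructive_ereal ereal.
Set Implicit Arguments. Unset Strict Implicit. Unset Printing Implicit Defensive.
Import Order.TTheory GRing.Theory Num.Theory.
Local Open Scope ring_scope.
Local Open Scope classical_set_scope.

Section Defs.
Variables (R : realType) (n d : nat).

Definition inner_row (X : 'M[R]_(n, d.+1)) (i : 'I_n) (b : 'I_d.+1 -> R) : R :=
  \sum_(j < d.+1) X i j * b j.

Definition Xtilde (X : 'M[R]_(n, d.+1)) : 'M[R]_(n, d) :=
  \matrix_(i < n, j < d) X i (lift ord0 j).

Definition wls (X : 'M[R]_(n, d.+1)) (y : 'I_n -> R) (w : 'I_n -> R)
  (b : 'I_d.+1 -> R) : R :=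
  n%:R^-1 * \sum_(i < n) w i * (inner_row X i b - y i) ^+ 2.

Definition OLS (X : 'M[R]_(n, d.+1)) (y : 'I_n -> R) (w : 'I_n -> R) :
  set ('I_d.+1 -> R) :=
  [set b | forall b' : 'I_d.+1 -> R, wls X y w b <= wls X y w b'].

Definition in_unit_cube (w : 'I_n -> R) : Prop := forall i, 0 <= w i <= 1.

Definition l1norm (w : 'I_n -> R) : R := \sum_(i < n) `|w i|.

(* Stability(X,y) = inf { n - ||w||_1 : w in [0,1]^n, beta_1 = 0, beta in OLS(X,y,w) }
   as an extended real (inf of the empty set is +oo). *)
Definition Stability (X : 'M[R]_(n, d.+1)) (y : 'I_n -> R) : \bar R :=
  ereal_inf [set ((n%:R - l1norm w)%:E) | w in
    [set w | in_unit_cube w /\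
       exists b : 'I_d.+1 -> R, b ord0 = 0 /\ OLS X y w b]].

End Defs.

(* Call a weight vector w feasible when the weighted normal equations
   sum_i w_i r_i(lam) X_i = 0 have a solution lam, where r(lam) is the residual
   of the model restricted to the last d coordinates; these are exactly the
   weights for which some weighted least-squares solution has beta_1 = 0.  Both
   sides of the equivalence then say that some feasible w in the unit cube has
   mass at least n - k.
   For the stability side the infimum must be attained.  The feasible weights
   form a closed subset of the cube: along converging feasible weights the
   coefficients lam may diverge, but the weighted residual energy stays below
   sum_i y_i^2, which is enough to pass to the limit in the orthogonality
   conditions characterising feasibility.
   For the other side fix lam.  The weights of mass at least n - k form a
   compact convex set; if its image under w |-> sum_i w_i r_i X_i missed 0, the
   image point of minimal norm g would satisfy <g, x> >= |g|^2 > 0 on the whole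
   image, so u = -g would contradict the hypothesis. *)

From HB Require Import structures.
From mathcomp Require Import all_boot all_order all_algebra.
From mathcomp Require Import boolp classical_sets reals constructive_ereal ereal.
From mathcomp Require Import topology normedtype derive convex.
From mathcomp Require Import ring lra.
Set Implicit Arguments.
Unset Strict Implicit.
Unset Printing Implicit Defensive.
Import Order.TTheory GRing.Theory Num.Theory.
Import numFieldNormedType.Exports.
Local Open Scope ring_scope.
Local Open Scope classical_set_scope.

Lemma ge0_of_quadratic_ge0 (R : realFieldType) (P Q : R) :
  (forall t, 0 < t <= 1 -> 0 <= 2 * t * P + t ^+ 2 * Q) -> 0 <= P.
Proof.
move=> quad; rewrite leNgt; apply/negP => P_lt0.
have QP_gt0 : 0 < `|Q| - P by have := normr_ge0 Q; lra.
pose t := - P / (`|Q| - P).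
have t_gt0 : 0 < t by rewrite divr_gt0 // oppr_gt0.
have tE : t * (`|Q| - P) = - P by rewrite mulfVK ?gt_eqF.
have t_le1 : t <= 1 by have := normr_ge0 Q; nra.
have tQ_lt : t * `|Q| < - P by nra.
have := quad t; rewrite t_gt0 t_le1 => /(_ isT).
have : t ^+ 2 * Q <= t ^+ 2 * `|Q| by rewrite ler_wpM2l ?sqr_ge0 ?ler_norm.
nra.
Qed.

Lemma continuous_sum (R : realType) (T : topologicalType) (I : Type) (r : seq I)
    (P : pred I) (f : I -> T -> R) :
  (forall i, continuous (f i)) -> continuous (fun x => \sum_(i <- r | P i) f i x).
Proof. by move=> f_cont; apply: continuous_big => //; exact: add_continuous. Qed.

Section Separation.
Variables (R : realType) (n m : nat).

Lemma row_dotE (a b : 'rV[R]_m) : (a *m b^T) 0 0 = \sum_j a 0 j * b 0 j.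
Proof. by rewrite mxE; apply: eq_bigr => j _; rewrite mxE. Qed.

Lemma continuous_mulmx_sqnorm (A : 'M[R]_(n, m)) :
  continuous (fun v : 'rV[R]_n => (v *m A *m (v *m A)^T) 0 0).
Proof.
have -> : (fun v : 'rV[R]_n => (v *m A *m (v *m A)^T) 0 0) =
    fun v => \sum_j (\sum_i v 0 i * A i j) * (\sum_i v 0 i * A i j).
  by apply/funext => v; rewrite row_dotE; apply: eq_bigr => j _; rewrite mxE.
have coord_cont j : continuous (fun v : 'rV[R]_n => \sum_i v 0 i * A i j).
  apply: continuous_sum => i v; apply: continuousM; first exact: coord_continuous.
  exact: cst_continuous.
by apply: continuous_sum => j v; apply: continuousM; exact: coord_cont.
Qed.

Lemma exists_mulmx_eq0_of_nonseparated (C : set 'rV[R]_n) (A : 'M[R]_(n, m)) :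
  compact C -> convex_set (C : set (convex_lmodType 'rV[R]_n)) ->
  (forall u : 'cV[R]_m, exists2 v, C v & 0 <= (v *m A *m u) 0 0) ->
  exists2 v, C v & v *m A = 0.
Proof.
move=> C_compact C_convex nonsep.
pose q (v : 'rV[R]_n) := (v *m A *m (v *m A)^T) 0 0.
have q_cont : continuous q by exact: continuous_mulmx_sqnorm.
have C_neq0 : C !=set0 by have [v Cv _] := nonsep 0; exists v.
have [v0 /set_mem Cv0 v0_min] :=
  compact_EVT_min C_neq0 C_compact (continuous_subspaceT q_cont).
set g := v0 *m A.
have variational v : C v -> q v0 <= (v *m A *m g^T) 0 0.
  move=> Cv; set h := v *m A - g.
  have -> : (v *m A *m g^T) 0 0 = q v0 + (g *m h^T) 0 0.
    rewrite /q -/g !row_dotE -big_split /=.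
    by apply: eq_bigr => j _; rewrite !mxE; ring.
  rewrite lerDl.
  apply: (@ge0_of_quadratic_ge0 _ _ ((h *m h^T) 0 0)) => t /andP[t0 t1].
  have Cvt : C (t *: v + (1 - t) *: v0).
    have := C_convex v v0 (Itv01 (ltW t0) t1) (mem_set Cv) (mem_set Cv0).
    by rewrite inE.
  have vtA : (t *: v + (1 - t) *: v0) *m A = g + t *: h.
    by rewrite mulmxDl -!scalemxAl scalerBl scale1r scalerBr addrCA.
  have expand : q (t *: v + (1 - t) *: v0) - q v0 =
      2 * t * (g *m h^T) 0 0 + t ^+ 2 * (h *m h^T) 0 0.
    rewrite /q vtA -/g !row_dotE -sumrB !mulr_sumr -big_split /=.
    by apply: eq_bigr => j _; rewrite !mxE; ring.
  by rewrite -expand subr_ge0; apply: v0_min; exact: mem_set.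
have [v Cv] := nonsep (- g^T); rewrite mulmxN mxE oppr_ge0 => vAg_le0.
have qv0_le0 : q v0 <= 0 := le_trans (variational v Cv) vAg_le0.
have sq_ge0 j : 0 <= g 0 j * g 0 j by rewrite -expr2 sqr_ge0.
have /psumr_eq0P g0 : \sum_j g 0 j * g 0 j = 0.
  by apply/eqP; rewrite eq_le -row_dotE qv0_le0 row_dotE sumr_ge0.
exists v0 => //; apply/matrixP => i j; rewrite ord1 [RHS]mxE -/g.
by apply/eqP; rewrite -sqrf_eq0 expr2 g0.
Qed.

End Separation.

Lemma submx_of_orth (F : fieldType) (p q : nat) (M : 'M[F]_(p, q)) (b : 'rV[F]_q) :
  (forall c : 'cV_q, M *m c = 0 -> b *m c = 0) -> (b <= M)%MS.
Proof.
move=> orth; rewrite submxE; apply/eqP/matrixP => i j.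
have := orth (cokermx M *m delta_mx j 0).
rewrite (mulmxA M) mulmx_coker mul0mx (mulmxA b) -colE => /(_ erefl)/matrixP/(_ i 0).
by rewrite !mxE.
Qed.

Section WeightedRegression.
Variables (R : realType) (n d : nat) (X : 'M[R]_(n, d.+1)) (y : 'I_n -> R).
Implicit Types (w : 'I_n -> R) (b u : 'I_d.+1 -> R) (lam : 'I_d -> R).

Lemma sum_mul_inner_row (c : 'I_n -> R) u :
  \sum_i c i * inner_row X i u = \sum_j (\sum_i c i * X i j) * u j.
Proof.
rewrite /inner_row; under eq_bigr do rewrite mulr_sumr.
rewrite exchange_big; apply: eq_bigr => j _; rewrite mulr_suml.
by apply: eq_bigr => i _; rewrite mulrA.
Qed.

Lemma inner_row_shift i b u t :
  inner_row X i (fun j => b j + t * u j) = inner_row X i b + t * inner_row X i u.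
Proof.
rewrite /inner_row mulr_sumr -big_split; apply: eq_bigr => j _ /=.
by rewrite mulrDr mulrCA.
Qed.

Lemma weighted_sse_shift w b u t :
  \sum_i w i * (inner_row X i (fun j => b j + t * u j) - y i) ^+ 2 =
  \sum_i w i * (inner_row X i b - y i) ^+ 2
  + 2 * t * \sum_i w i * (inner_row X i b - y i) * inner_row X i u
  + t ^+ 2 * \sum_i w i * inner_row X i u ^+ 2.
Proof.
rewrite !mulr_sumr -!big_split; apply: eq_bigr => i _ /=.
by rewrite inner_row_shift; ring.
Qed.

Lemma OLS_normalP w b : (forall i, 0 <= w i) ->
  OLS X y w b <->
  forall u, \sum_i w i * (inner_row X i b - y i) * inner_row X i u = 0.
Proof.
move=> w_ge0; split=> [b_min u | normal b'].
- have [n0|n_gt0] := posnP n.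
    by apply: big1 => i; have := ltn_ord i; rewrite {2}n0.
  set P := \sum_i _ * _ * _; pose Q := \sum_i w i * inner_row X i u ^+ 2.
  have quad t : 0 <= 2 * t * P + t ^+ 2 * Q.
    have := b_min (fun j => b j + t * u j).
    by rewrite /wls ler_pM2l ?invr_gt0 ?ltr0n // weighted_sse_shift -addrA lerDl.
  have P_ge0 : 0 <= P by apply: (@ge0_of_quadratic_ge0 _ _ Q) => t _.
  have NP_ge0 : 0 <= - P.
    apply: (@ge0_of_quadratic_ge0 _ _ Q) => t _.
    by rewrite mulrN; have := quad (- t); rewrite mulrN mulNr sqrrN.
  by apply/eqP; rewrite eq_le -oppr_ge0 NP_ge0 P_ge0.
- have -> : b' = fun j => b j + 1 * (b' j - b j).
    by apply/funext => j; rewrite mul1r addrC subrK.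
  rewrite /wls ler_wpM2l ?invr_ge0 ?ler0n // weighted_sse_shift normal.
  rewrite mulr0 addr0 lerDl mulr_ge0 ?sqr_ge0 ?sumr_ge0 // => i _.
  by rewrite mulr_ge0 ?sqr_ge0.
Qed.

Definition extend0 lam : 'I_d.+1 -> R :=
  fun j => if unlift ord0 j is Some j' then lam j' else 0.

Lemma extend0_lift b : b ord0 = 0 -> extend0 (fun j => b (lift ord0 j)) = b.
Proof.
by move=> b0; apply/funext => j; rewrite /extend0; case: unliftP => [j' ->|->].
Qed.

Definition resid lam i := \sum_(j < d) Xtilde X i j * lam j - y i.

Lemma residE lam i : inner_row X i (extend0 lam) - y i = resid lam i.
Proof.
rewrite /inner_row big_ord_recl /extend0 unlift_none mulr0 add0r.
by congr (_ - _); apply: eq_bigr => j _; rewrite liftK mxE.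
Qed.

Definition normal_eq w lam :=
  forall u, \sum_i w i * resid lam i * inner_row X i u = 0.

Definition feasible w := exists lam, normal_eq w lam.

Lemma normal_eq_coord w lam :
  (forall j, \sum_i w i * resid lam i * X i j = 0) -> normal_eq w lam.
Proof.
by move=> eq0 u; rewrite sum_mul_inner_row big1 // => j _; rewrite eq0 mul0r.
Qed.

Lemma OLS_extend0P w lam : (forall i, 0 <= w i) ->
  OLS X y w (extend0 lam) <-> normal_eq w lam.
Proof.
move=> w_ge0; rewrite OLS_normalP //.
have E u : \sum_i w i * (inner_row X i (extend0 lam) - y i) * inner_row X i u =
           \sum_i w i * resid lam i * inner_row X i u.
  by apply: eq_bigr => i _; rewrite residE.
by split=> normal u; [rewrite -E | rewrite E]; exact: normal.
Qed.

Lemma feasibleP w : (forall i, 0 <= w i) ->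
  (exists b, b ord0 = 0 /\ OLS X y w b) <-> feasible w.
Proof.
move=> w_ge0; split=> [[b [b0 b_OLS]] | [lam normal]].
  by exists (fun j => b (lift ord0 j)); rewrite -OLS_extend0P // extend0_lift.
by exists (extend0 lam); rewrite OLS_extend0P // /extend0 unlift_none.
Qed.

Lemma resid_energy_le w lam : (forall i, 0 <= w i) -> normal_eq w lam ->
  \sum_i w i * resid lam i ^+ 2 <= \sum_i w i * y i ^+ 2.
Proof.
move=> w_ge0 normal; rewrite -subr_ge0.
have fit i : inner_row X i (extend0 lam) = resid lam i + y i by rewrite -residE subrK.
have -> : \sum_i w i * y i ^+ 2 - \sum_i w i * resid lam i ^+ 2 =
    \sum_i w i * inner_row X i (extend0 lam) ^+ 2
    - 2 * \sum_i w i * resid lam i * inner_row X i (extend0 lam).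
  by rewrite mulr_sumr -!sumrB; apply: eq_bigr => i _; rewrite fit; ring.
rewrite normal mulr0 subr0; apply: sumr_ge0 => i _.
by rewrite mulr_ge0 ?sqr_ge0.
Qed.

Lemma moment_eq_weight_diff w v lam u : normal_eq v lam ->
  (forall l, \sum_i w i * Xtilde X i l * inner_row X i u = 0) ->
  \sum_i w i * y i * inner_row X i u =
  \sum_i (v i - w i) * resid lam i * inner_row X i u.
Proof.
move=> normal orth.
have fitted : \sum_i w i * (\sum_l Xtilde X i l * lam l) * inner_row X i u = 0.
  transitivity (\sum_l lam l * \sum_i w i * Xtilde X i l * inner_row X i u).
    under eq_bigr do rewrite mulr_sumr mulr_suml.
    rewrite exchange_big; apply: eq_bigr => l _; rewrite mulr_sumr.
    by apply: eq_bigr => i _; ring.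
  by rewrite big1 // => l _; rewrite orth mulr0.
have -> : \sum_i (v i - w i) * resid lam i * inner_row X i u =
    \sum_i v i * resid lam i * inner_row X i u
    - \sum_i w i * (\sum_l Xtilde X i l * lam l) * inner_row X i u
    + \sum_i w i * y i * inner_row X i u.
  by rewrite -sumrB -big_split /=; apply: eq_bigr => i _; rewrite /resid; ring.
by rewrite normal fitted subrr add0r.
Qed.

Lemma feasible_of_orth w :
  (forall u, (forall l, \sum_i w i * Xtilde X i l * inner_row X i u = 0) ->
     \sum_i w i * y i * inner_row X i u = 0) ->
  feasible w.
Proof.
move=> orth.
pose G : 'M[R]_(d, d.+1) := \matrix_(l, j) \sum_i w i * Xtilde X i l * X i j.
pose m : 'rV[R]_d.+1 := \row_j \sum_i w i * y i * X i j.
have /submxP [x mE] : (m <= G)%MS.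
  apply: submx_of_orth => c Gc0; apply/matrixP => i k; rewrite !ord1 [RHS]mxE.
  have -> : (m *m c) 0 0 = \sum_i w i * y i * inner_row X i (fun j => c j 0).
    by rewrite sum_mul_inner_row mxE; apply: eq_bigr => j _; rewrite mxE.
  apply: orth => l; rewrite sum_mul_inner_row.
  move/matrixP/(_ l 0): Gc0; rewrite !mxE => Gc0; rewrite -[RHS]Gc0.
  by apply: eq_bigr => j _; rewrite /G mxE.
exists (fun l => x 0 l); apply: normal_eq_coord => j.
move/matrixP/(_ 0 j): mE; rewrite !mxE => mj.
transitivity (\sum_l x 0 l * G l j - \sum_i w i * y i * X i j); last first.
  by rewrite -mj subrr.
under [X in _ = X - _]eq_bigr do rewrite mxE mulr_sumr.
rewrite exchange_big -sumrB; apply: eq_bigr => i _; rewrite /resid.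
rewrite mulrBr mulrBl mulr_sumr mulr_suml; congr (_ - _).
by apply: eq_bigr => l _; ring.
Qed.

End WeightedRegression.

Lemma near_dist_le_self (R : realType) (x0 e : R) : 0 <= x0 -> 0 < e ->
  \forall x \near x0, `|x - x0| < e /\ (0 <= x -> `|x - x0| <= x).
Proof.
move=> x0_ge0 e_gt0.
have near_x0 r : 0 < r -> \forall x \near x0, `|x - x0| < r.
  move=> r_gt0; near=> x; rewrite distrC; near: x.
  exact: (@cvgr_dist_lt _ _ _ (nbhs x0) _ id x0 cvg_id r r_gt0).
move: x0_ge0; rewrite le_eqVlt => /predU1P[x0_eq0 | x0_gt0]; near=> x;
  (split; first by near: x; apply: near_x0) => x_ge0.
  by rewrite -x0_eq0 subr0 ger0_norm.
have x_close : `|x - x0| < x0 / 2 by near: x; apply: near_x0; rewrite divr_gt0.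
by have := x_close; rewrite ltr_distl => /andP[? _]; apply/ltW/(lt_trans x_close); lra.
Unshelve. all: by end_near. Qed.

Lemma amgm_weight_defect (R : realFieldType) (dl v r h s t : R) :
  0 < s -> `|dl| <= v -> `|dl| <= s * t ->
  `|dl * r * h| <= s * (v * r ^+ 2) + t * h ^+ 2.
Proof.
move=> s_gt0 dl_le_v dl_le_st.
have rh : 2 * s * `|r * h| <= s ^+ 2 * r ^+ 2 + h ^+ 2.
  have := sqr_ge0 (s * `|r| - `|h|); rewrite normrM -[r ^+ 2]real_normK ?num_real //.
  rewrite -[h ^+ 2]real_normK ?num_real //; nra.
rewrite -mulrA normrM -(ler_pM2l s_gt0).
have dl_ge0 := normr_ge0 dl; have v_ge0 := le_trans dl_ge0 dl_le_v.
have s2r2_ge0 : 0 <= s ^+ 2 * r ^+ 2 by rewrite mulr_ge0 ?sqr_ge0.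
have h2_ge0 := sqr_ge0 h; have st_ge0 := le_trans dl_ge0 dl_le_st.
have := ler_wpM2l dl_ge0 rh.
have := ler_wpM2r s2r2_ge0 dl_le_v; have := ler_wpM2r h2_ge0 dl_le_st.
have := mulr_ge0 v_ge0 s2r2_ge0; have := mulr_ge0 st_ge0 h2_ge0.
rewrite !expr2; nra.
Qed.

Section UnitCube.
Variables (R : realType) (n : nat).

Definition unit_cube : set 'rV[R]_n := [set v | in_unit_cube (v ord0)].

Lemma unit_cube_compact : compact unit_cube.
Proof.
suff -> : unit_cube = [set v | forall i, `[0, 1]%classic (v ord0 i)].
  exact: (@rV_compact R n (fun=> `[0, 1]%classic) (fun=> @segment_compact R 0 1)).
by apply/seteqP; split=> v v01 i; have := v01 i; rewrite /= in_itv.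
Qed.

Lemma unit_cube_closed : closed unit_cube.
Proof. exact: compact_closed (@norm_hausdorff _ _) unit_cube_compact. Qed.

Lemma row_ord0 (w : 'I_n -> R) : (\row_i w i) ord0 = w.
Proof. by apply/funext => i; rewrite mxE. Qed.

Lemma l1norm_unit_cube (w : 'I_n -> R) : in_unit_cube w -> l1norm w = \sum_i w i.
Proof.
by move=> w01; apply: eq_bigr => i _; rewrite ger0_norm //; case/andP: (w01 i).
Qed.

End UnitCube.
Arguments unit_cube {R n}.

Section FeasibleWeights.
Variables (R : realType) (n d : nat) (X : 'M[R]_(n, d.+1)) (y : 'I_n -> R).

(* Feasible weights as row vectors, to use the topology of ['rV_n]. *)
Definition feasible_rV : set 'rV[R]_n :=
  [set v | in_unit_cube (v ord0) /\ feasible X y (v ord0)].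

Lemma closure_feasible_rV vs : closure feasible_rV vs -> feasible X y (vs ord0).
Proof.
move=> vs_cl; set ws := vs ord0.
have ws01 : in_unit_cube ws.
  by apply: unit_cube_closed; apply: closureS vs_cl => v [].
apply: feasible_of_orth => u orth.
apply/eqP; rewrite -normr_le0; apply/ler_addgt0Pr => e e_gt0; rewrite add0r.
pose Y := \sum_i y i ^+ 2; pose H := \sum_i inner_row X i u ^+ 2.
have Y_ge0 : 0 <= Y by apply: sumr_ge0 => i _; exact: sqr_ge0.
have H_ge0 : 0 <= H by apply: sumr_ge0 => i _; exact: sqr_ge0.
pose s := e / 2 / (Y + 1); pose t := e / 2 / (H + 1).
have sE : s * (Y + 1) = e / 2 by rewrite mulfVK // gt_eqF // ltr_wpDl.
have tE : t * (H + 1) = e / 2 by rewrite mulfVK // gt_eqF // ltr_wpDl.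
have s_gt0 : 0 < s by rewrite !divr_gt0 // ltr_wpDl.
have t_gt0 : 0 < t by rewrite !divr_gt0 // ltr_wpDl.
(* Approximate ws by feasible v with |v_i - ws_i| <= v_i: whatever lam is,
   each term (v_i - ws_i) r_i h_i is then controlled by v_i r_i^2 <= Y. *)
have close_i i : \forall v \near vs, `|(v : 'rV[R]_n) ord0 i - ws i| < s * t /\
    (0 <= v ord0 i -> `|v ord0 i - ws i| <= v ord0 i).
  apply: (@coord_continuous _ _ _ ord0 i vs
    [set x | `|x - ws i| < s * t /\ (0 <= x -> `|x - ws i| <= x)]).
  by apply: near_dist_le_self; [case/andP: (ws01 i) | rewrite mulr_gt0].
have /vs_cl [v [[v01 [lam normal]] close]] := filter_forall (nbhs_filter vs) close_i.
have energy : \sum_i v ord0 i * resid X y lam i ^+ 2 <= Y.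
  apply: le_trans (resid_energy_le _ normal) _ => [i|]; first by case/andP: (v01 i).
  apply: ler_sum => i _; rewrite ler_piMl ?sqr_ge0 //; by case/andP: (v01 i).
rewrite (moment_eq_weight_diff normal orth).
apply: le_trans (ler_norm_sum _ _ _) _.
have term i : `|(v ord0 i - ws i) * resid X y lam i * inner_row X i u| <=
    s * (v ord0 i * resid X y lam i ^+ 2) + t * inner_row X i u ^+ 2.
  have [close_st close_v] := close i.
  by apply: amgm_weight_defect => //; [apply: close_v; case/andP: (v01 i) | exact: ltW].
apply: le_trans (ler_sum _ (fun i _ => term i)) _.
rewrite big_split /= -!mulr_sumr -/H.
have : s * \sum_i v ord0 i * resid X y lam i ^+ 2 <= s * Y by rewrite ler_wpM2l // ltW.
lra.
Qed.

Lemma feasible_weight_sum_attained (c : R) :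
  (forall e, 0 < e ->
     exists w, in_unit_cube w /\ feasible X y w /\ c - e <= \sum_i w i) ->
  exists w, in_unit_cube w /\ feasible X y w /\ c <= \sum_i w i.
Proof.
move=> approx.
have cl_cube : closure feasible_rV `<=` unit_cube.
  move=> v /(closureS (fun v (Fv : feasible_rV v) => proj1 Fv)).
  exact: unit_cube_closed.
have cl_compact : compact (closure feasible_rV).
  apply: (subclosed_compact _ _ cl_cube); first exact: closed_closure.
  exact: unit_cube_compact.
have in_cl w : in_unit_cube w -> feasible X y w -> closure feasible_rV (\row_i w i).
  by move=> w01 w_feas; apply: subset_closure; rewrite /feasible_rV /= row_ord0.
have cl_neq0 : closure feasible_rV !=set0.
  by have [w [w01 [w_feas _]]] := approx 1 ltr01; exists (\row_i w i); exact: in_cl.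
have sum_cont : continuous (fun v : 'rV[R]_n => \sum_i v ord0 i).
  by apply: continuous_sum => i; exact: coord_continuous.
have [vs /set_mem vs_cl vs_max] :=
  compact_EVT_max cl_neq0 cl_compact (continuous_subspaceT sum_cont).
exists (vs ord0); split; first exact: cl_cube.
split; first exact: closure_feasible_rV.
apply/ler_addgt0Pr => e e_gt0.
have [w [w01 [w_feas w_ge]]] := approx e e_gt0.
have := vs_max _ (mem_set (in_cl w w01 w_feas)); rewrite row_ord0; lra.
Qed.

Lemma Stability_le (k : R) :
  (Stability X y <= k%:E)%E <->
  exists w, in_unit_cube w /\ n%:R - k <= l1norm w /\ feasible X y w.
Proof.
split=> [S_le | [w [w01 [w_ge w_feas]]]].
  have approx e : 0 < e ->
      exists w, in_unit_cube w /\ feasible X y w /\ n%:R - k - e <= \sum_i w i.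
    move=> e_gt0; have : (Stability X y < (k + e)%:E)%E.
      by apply: le_lt_trans S_le _; rewrite lte_fin ltrDl.
    move=> /ereal_inf_lt [_ [w [w01 w_OLS] <-]]; rewrite lte_fin => w_lt.
    exists w; split=> //; split; first by apply/feasibleP => // i; case/andP: (w01 i).
    by rewrite -l1norm_unit_cube //; lra.
  have [w [w01 [w_feas w_ge]]] := feasible_weight_sum_attained approx.
  by exists w; rewrite l1norm_unit_cube.
apply: le_trans (ereal_inf_lbound _) _.
  exists w => //; split=> //; apply/feasibleP => // i; by case/andP: (w01 i).
by rewrite lee_fin; lra.
Qed.

Lemma normal_eq_of_nonseparated lam (c : R) :
  (forall u, exists w, in_unit_cube w /\ c <= l1norm w /\
     0 <= \sum_i w i * resid X y lam i * inner_row X i u) ->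
  exists w, in_unit_cube w /\ c <= l1norm w /\ normal_eq X y w lam.
Proof.
move=> nonsep.
pose C := [set v : 'rV[R]_n | in_unit_cube (v ord0) /\ c <= \sum_i v ord0 i].
pose A : 'M[R]_(n, d.+1) := \matrix_(i, j) (resid X y lam i * X i j).
have vAu v (u : 'cV[R]_d.+1) : (v *m A *m u) 0 0 =
    \sum_i v 0 i * resid X y lam i * inner_row X i (fun j => u j 0).
  rewrite sum_mul_inner_row mxE; apply: eq_bigr => j _; rewrite !mxE; congr (_ * _).
  by apply: eq_bigr => i _; rewrite mxE mulrA.
have C_closed : closed C.
  apply: (@closedI _ unit_cube ((fun v => \sum_i v ord0 i) @^-1` [set x | c <= x])).
    exact: unit_cube_closed.
  apply: preimage_closed; last exact: closed_ge.
  by move=> v _; apply: continuous_sum => i; exact: coord_continuous.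
have C_compact : compact C.
  apply: (@subclosed_compact _ _ unit_cube C_closed); first exact: unit_cube_compact.
  by move=> v [].
have C_convex : convex_set (C : set (convex_lmodType 'rV[R]_n)).
  move=> v1 v2 a /set_mem [v1_01 v1_c] /set_mem [v2_01 v2_c]; apply/mem_set => /=.
  have /andP[a_ge0 a_le1] : 0 <= a%:num <= 1 by rewrite ge0 le1.
  split=> [i|].
    rewrite !mxE /unstable.onem.
    have := v1_01 i; have := v2_01 i => /andP[? ?] /andP[? ?].
    apply/andP; split; nra.
  under eq_bigr do rewrite !mxE.
  rewrite big_split /= -!mulr_sumr /unstable.onem; nra.
have [v [v01 v_ge] vA0] : exists2 v, C v & v *m A = 0.
  apply: exists_mulmx_eq0_of_nonseparated => // u.
  have [w [w01 [w_ge w_pos]]] := nonsep (fun j => u j 0).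
  exists (\row_i w i); last by rewrite vAu row_ord0.
  by split; rewrite row_ord0 // -l1norm_unit_cube.
exists (v ord0); split=> //; split; first by rewrite l1norm_unit_cube.
apply: normal_eq_coord => j; move/matrixP/(_ 0 j): vA0; rewrite !mxE => vA0.
by rewrite -[RHS]vA0; apply: eq_bigr => i _; rewrite /A mxE mulrA.
Qed.

End FeasibleWeights.

Theorem lemma1 (R : realType) (n d : nat) (X : 'M[R]_(n, d.+1)) (y : 'I_n -> R)
  (k : R) : 0 <= k ->
  ((Stability X y <= k%:E)%E <->
   exists lam : 'I_d -> R, forall u : 'I_d.+1 -> R,
     exists w : 'I_n -> R, in_unit_cube w /\ n%:R - k <= l1norm w /\
       0 <= \sum_(i < n) w i * (\sum_(j < d) Xtilde X i j * lam j - y i)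
                              * inner_row X i u).
Proof.
move=> _; rewrite Stability_le.
split=> [[w [w01 [w_ge [lam normal]]]] | [lam nonsep]].
  by exists lam => u; exists w; rewrite (normal u).
have [w [w01 [w_ge normal]]] := normal_eq_of_nonseparated nonsep.
by exists w; split; [|split; [|exists lam]].
Qed.
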